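(* Let $\boldsymbol{u}^\star=(1,1)^{\mathrm T}$ and $f(\boldsymbol{u})=\frac12\|\boldsymbol{u}\boldsymbol{u}^{\mathrm T}-\boldsymbol{u}^\star{\boldsymbol{u}^\star}^{\mathrm T}\|_1$ on $\mathbb{R}^2$. Then $\boldsymbol{u}_0:=(-1,1)^{\mathrm T}$ is a stationary point of $f$ that is not a global minimizer, and for no integer $p\ge1$ does there exist an active $C^p$-manifold for $f$ around $\boldsymbol{u}_0$.
   Context: $\|\cdot\|_1$ is the entrywise $\ell_1$-norm; $\partial f$ denotes the subdifferential (Fréchet = limiting = Clarke for this $f$). Active manifold: given $g:\mathbb{R}^d\to\mathbb{R}$ and $\bar{\boldsymbol{x}}$ with $\boldsymbol{0}\in\partial g(\bar{\boldsymbol{x}})$, a set $\mathbb{M}\subseteq\mathbb{R}^d$ containing $\bar{\boldsymbol{x}}$ is an active $C^p$-manifold around $\bar{\boldsymbol{x}}$ if there is $\varepsilon>0$ such that: (smoothness) $\mathbb{M}$ intersected with the open ball of radius $\varepsilon$ around $\bar{\boldsymbol{x}}$ is a $C^p$-smooth embedded submanifold of $\mathbb{R}^d$, and the restriction of $g$ to $\mathbb{M}$ is $C^p$-smooth near $\bar{\boldsymbol{x}}$ (i.e., agrees on $\mathbb{M}$ near $\bar{\boldsymbol{x}}$ with a $C^p$-smooth function defined on a neighborhood of $\bar{\boldsymbol{x}}$); (sharpness) $\inf\{\|\boldsymbol{v}\|:\boldsymbol{v}\in\partial g(\boldsymbol{x}),\ \boldsymbol{x}\in\mathbb{U}\setminus\mathbb{M}\}>0$,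 where $\mathbb{U}=\{\boldsymbol{x}:\|\boldsymbol{x}-\bar{\boldsymbol{x}}\|<\varepsilon,\ |g(\boldsymbol{x})-g(\bar{\boldsymbol{x}})|<\varepsilon\}$. *)

From Stdlib Require Import Reals.
From Coquelicot Require Import Coquelicot.
Open Scope R_scope.

Definition pt := (R * R)%type.

Definition inner (u v : pt) : R := fst u * fst v + snd u * snd v.
Definition norm2 (u : pt) : R := sqrt (inner u u).
Definition dist2 (u v : pt) : R := norm2 (fst u - fst v, snd u - snd v).

Definition ball2 (c : pt) (r : R) : pt -> Prop := fun z => dist2 z c < r.

(** u* = (1,1);  fobj(u) = f(u) = 1/2 || u u^T - u* u*^T ||_1  (entrywise l1 norm). *)
Definition ustar : pt := (1, 1).
Definition fobj (u : pt) : R :=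
  / 2 * ( Rabs (fst u * fst u - fst ustar * fst ustar)
        + Rabs (fst u * snd u - fst ustar * snd ustar)
        + Rabs (snd u * fst u - snd ustar * fst ustar)
        + Rabs (snd u * snd u - snd ustar * snd ustar)).

Definition u0 : pt := (-1, 1).

(** Frechet subdifferential: v in dg(x) iff
    liminf_{y -> x} (g y - g x - <v, y - x>) / |y - x| >= 0. *)
Definition frechet_subdiff (g : pt -> R) (x v : pt) : Prop :=
  forall eps, 0 < eps -> exists delta, 0 < delta /\
    forall y, dist2 y x < delta ->
      g y - g x - inner v (fst y - fst x, snd y - snd x) >= - eps * dist2 y x.

Definition partial1 (h : pt -> R) : pt -> R :=
  fun z => Derive (fun t => h (t, snd z)) (fst z).
Definition partial2 (h : pt -> R) : pt -> R :=
  fun z => Derive (fun t => h (fst z, t)) (snd z).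

Definition continuous_on2 (h : pt -> R) (U : pt -> Prop) : Prop :=
  forall z, U z -> forall eps, 0 < eps -> exists delta, 0 < delta /\
    forall y, dist2 y z < delta -> Rabs (h y - h z) < eps.

Fixpoint Cp_on (p : nat) (h : pt -> R) (U : pt -> Prop) : Prop :=
  match p with
  | O => continuous_on2 h U
  | S q => continuous_on2 h U /\
           (forall z, U z -> ex_derive (fun t => h (t, snd z)) (fst z)
                          /\ ex_derive (fun t => h (fst z, t)) (snd z)) /\
           Cp_on q (partial1 h) U /\ Cp_on q (partial2 h) U
  end.

(** C^p embedded submanifold of R^2 (of dimension 0, 1 or 2): locally the zero
    set of a C^p submersion to R^(2-k). *)
Definition submanifold_dim2 (S : pt -> Prop) : Prop :=
  forall m, S m -> exists r, 0 < r /\ forall z, ball2 m r z -> S z.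

Definition submanifold_dim1 (p : nat) (S : pt -> Prop) : Prop :=
  forall m, S m -> exists r, 0 < r /\ exists h : pt -> R,
    Cp_on p h (ball2 m r) /\
    (forall z, ball2 m r z -> (partial1 h z, partial2 h z) <> (0, 0)) /\
    (forall z, ball2 m r z -> (S z <-> h z = 0)).

Definition submanifold_dim0 (p : nat) (S : pt -> Prop) : Prop :=
  forall m, S m -> exists r, 0 < r /\ exists F1 F2 : pt -> R,
    Cp_on p F1 (ball2 m r) /\ Cp_on p F2 (ball2 m r) /\
    (forall z, ball2 m r z ->
       partial1 F1 z * partial2 F2 z - partial2 F1 z * partial1 F2 z <> 0) /\
    (forall z, ball2 m r z -> (S z <-> F1 z = 0 /\ F2 z = 0)).

Definition embedded_submanifold (p : nat) (S : pt -> Prop) : Prop :=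
  submanifold_dim0 p S \/ submanifold_dim1 p S \/ submanifold_dim2 S.

Definition active_manifold (p : nat) (g : pt -> R) (xbar : pt) (M : pt -> Prop)
  : Prop :=
  M xbar /\
  exists eps, 0 < eps /\
    embedded_submanifold p (fun x => M x /\ ball2 xbar eps x) /\
    (exists r, 0 < r /\ exists G : pt -> R,
        Cp_on p G (ball2 xbar r) /\
        forall x, M x -> ball2 xbar r x -> G x = g x) /\
    (* sharpness: inf { |v| : v in dg(x), x in U \ M } > 0 *)
    (exists c, 0 < c /\
       forall x v, ball2 xbar eps x -> Rabs (g x - g xbar) < eps -> ~ M x ->
         frechet_subdiff g x v -> c <= norm2 v).

(** Along the segments (-1, 1 - h) and (-1 + h, 1), 0 < h < 1, one has
    f = 2 - h^2/2, and (0, h), (-h, 0) are Fréchet subgradients there; their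
    norms tend to 0 while f tends to f(u0), so sharpness forces every active
    manifold to contain both segments near u0.  A manifold cut out by C^1
    equations F = 0 then has defining functions constant along two orthogonal
    directions at u0, hence with vanishing gradient, contradicting the rank
    condition.  An open active manifold would make f itself C^1 near u0, but
    t |-> f(t, 1) has one-sided slopes 0 and -2 at t = -1. *)

From Stdlib Require Import Reals Lra Lia Psatz Classical.
From Coquelicot Require Import Coquelicot.
Open Scope R_scope.

Lemma exists_pos_lt3 (a b c : R) : 0 < a -> 0 < b -> 0 < c ->
  exists k, 0 < k /\ k < a /\ k < b /\ k < c.
Proof.
  intros Ha Hb Hc. exists (Rmin a (Rmin b c) / 2).
  pose proof (Rmin_pos b c Hb Hc) as Hbc. pose proof (Rmin_pos a _ Ha Hbc).
  pose proof (Rmin_l a (Rmin b c)). pose proof (Rmin_r a (Rmin b c)).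
  pose proof (Rmin_l b c). pose proof (Rmin_r b c). lra.
Qed.

Lemma norm2_axis1 (x : R) : norm2 (x, 0) = Rabs x.
Proof.
  unfold norm2, inner; simpl. rewrite <- sqrt_Rsqr_abs. f_equal. unfold Rsqr. ring.
Qed.

Lemma norm2_axis2 (y : R) : norm2 (0, y) = Rabs y.
Proof.
  unfold norm2, inner; simpl. rewrite <- sqrt_Rsqr_abs. f_equal. unfold Rsqr. ring.
Qed.

Lemma dist2_shift1 (a b k : R) : dist2 (a + k, b) (a, b) = Rabs k.
Proof.
  unfold dist2; simpl. replace (a + k - a) with k by ring.
  replace (b - b) with 0 by ring. apply norm2_axis1.
Qed.

Lemma dist2_shift2 (a b k : R) : dist2 (a, b - k) (a, b) = Rabs k.
Proof.
  unfold dist2; simpl. replace (a - a) with 0 by ring.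
  replace (b - k - b) with (- k) by ring. rewrite norm2_axis2. apply Rabs_Ropp.
Qed.

Lemma ball2_center (c : pt) (r : R) : 0 < r -> ball2 c r c.
Proof.
  intros Hr. unfold ball2, dist2.
  replace (fst c - fst c) with 0 by ring. replace (snd c - snd c) with 0 by ring.
  rewrite norm2_axis1, Rabs_R0. exact Hr.
Qed.

Lemma dist2_sqr (y x : pt) :
  dist2 y x ^ 2 = (fst y - fst x) ^ 2 + (snd y - snd x) ^ 2.
Proof.
  unfold dist2, norm2, inner. rewrite pow2_sqrt; simpl;
    [ring | apply Rplus_le_le_0_compat; apply Rle_0_sqr].
Qed.

Lemma frechet_subdiff_of_quadratic_minorant (g : pt -> R) (x v : pt) :
  (forall y, g y - g x - inner v (fst y - fst x, snd y - snd x) >= - dist2 y x ^ 2) ->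
  frechet_subdiff g x v.
Proof.
  intros Hmin eps Heps. exists eps. split; [exact Heps|].
  intros y Hy. specialize (Hmin y).
  assert (Hpos : 0 <= dist2 y x) by apply sqrt_pos.
  nra.
Qed.

Lemma is_derive_side_slope (g : R -> R) (x l s m d : R) :
  is_derive g x l -> s <> 0 -> 0 < d ->
  (forall k, 0 < k < d -> Rabs ((g (x + s * k) - g x) / (s * k) - m) <= k) ->
  l = m.
Proof.
  intros Hg Hs Hd Hslope. apply is_derive_Reals in Hg.
  destruct (Req_dec l m) as [Heq | Hne]; [exact Heq | exfalso].
  set (e := Rabs (l - m) / 2).
  assert (He : 0 < e) by (pose proof (Rabs_pos_lt (l - m) ltac:(lra)); unfold e; lra).
  destruct (Hg e He) as [delta Hdelta].
  assert (Hsabs : 0 < Rabs s) by now apply Rabs_pos_lt.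
  assert (Hdelta_s : 0 < delta / Rabs s)
    by (apply Rdiv_lt_0_compat; [apply cond_pos | exact Hsabs]).
  destruct (exists_pos_lt3 d e (delta / Rabs s) Hd He Hdelta_s)
    as (k & Hk & Hkd & Hke & Hkdelta).
  assert (Hsk : s * k <> 0) by (apply Rmult_integral_contrapositive; split; lra).
  assert (Hsk_small : Rabs (s * k) < delta).
  { rewrite Rabs_mult, (Rabs_pos_eq k) by lra.
    apply (Rmult_lt_compat_l (Rabs s)) in Hkdelta; [|exact Hsabs].
    unfold Rdiv in Hkdelta. rewrite (Rmult_comm delta), <- Rmult_assoc,
      Rinv_r, Rmult_1_l in Hkdelta by lra.
    exact Hkdelta. }
  pose proof (Hdelta (s * k) Hsk Hsk_small) as Hnear_l.
  pose proof (Hslope k (conj Hk Hkd)) as Hnear_m.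
  set (q := (g (x + s * k) - g x) / (s * k)) in *.
  assert (Htri : Rabs (l - m) <= Rabs (q - m) + Rabs (q - l)).
  { replace (l - m) with ((q - m) + - (q - l)) by ring.
    rewrite <- (Rabs_Ropp (q - l)). apply Rabs_triang. }
  unfold e in *. lra.
Qed.

Lemma partials_eq_0_of_flat_corner (F : pt -> R) (a b d : R) : 0 < d ->
  ex_derive (fun t => F (t, b)) a -> ex_derive (fun t => F (a, t)) b ->
  (forall k, 0 < k < d -> F (a + k, b) = F (a, b) /\ F (a, b - k) = F (a, b)) ->
  partial1 F (a, b) = 0 /\ partial2 F (a, b) = 0.
Proof.
  intros Hd [l1 H1] [l2 H2] Hflat. unfold partial1, partial2; simpl.
  change (is_derive (fun t : R => F (t, b)) a l1) in H1.
  change (is_derive (fun t : R => F (a, t)) b l2) in H2.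
  rewrite (is_derive_unique _ _ _ H1), (is_derive_unique _ _ _ H2).
  split.
  - apply (is_derive_side_slope _ _ _ 1 0 d H1); [lra | exact Hd |].
    intros k Hk. replace (a + 1 * k) with (a + k) by ring.
    rewrite (proj1 (Hflat k Hk)).
    replace ((F (a, b) - F (a, b)) / (1 * k) - 0) with 0 by (field; lra).
    rewrite Rabs_R0. lra.
  - apply (is_derive_side_slope _ _ _ (-1) 0 d H2); [lra | exact Hd |].
    intros k Hk. replace (b + -1 * k) with (b - k) by ring.
    rewrite (proj2 (Hflat k Hk)).
    replace ((F (a, b) - F (a, b)) / (-1 * k) - 0) with 0 by (field; lra).
    rewrite Rabs_R0. lra.
Qed.

Lemma fobj_opposite_signs (x y : R) : x * y <= 0 ->
  fobj (x, y) = (Rabs (x * x - 1) + Rabs (y * y - 1)) / 2 + 1 - x * y.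
Proof.
  intros Hxy. unfold fobj, ustar; simpl.
  rewrite (Rabs_left1 (x * y - 1 * 1)) by lra.
  rewrite (Rabs_left1 (y * x - 1 * 1)) by lra.
  rewrite !Rmult_1_r. field.
Qed.

Lemma fobj_vertical_leg (h : R) : 0 <= h <= 1 -> fobj (-1, 1 - h) = 2 - h ^ 2 / 2.
Proof.
  intros Hh. rewrite fobj_opposite_signs by nra.
  replace (-1 * -1 - 1) with 0 by ring.
  rewrite Rabs_R0, (Rabs_left1 ((1 - h) * (1 - h) - 1)) by nra. field.
Qed.

Lemma fobj_horizontal_leg (h : R) : 0 <= h <= 1 -> fobj (-1 + h, 1) = 2 - h ^ 2 / 2.
Proof.
  intros Hh. rewrite fobj_opposite_signs by nra.
  replace (1 * 1 - 1) with 0 by ring.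
  rewrite Rabs_R0, (Rabs_left1 ((-1 + h) * (-1 + h) - 1)) by nra. field.
Qed.

Lemma fobj_horizontal_left (k : R) : 0 <= k -> fobj (-1 - k, 1) = 2 + 2 * k + k ^ 2 / 2.
Proof.
  intros Hk. rewrite fobj_opposite_signs by nra.
  replace (1 * 1 - 1) with 0 by ring.
  rewrite Rabs_R0, (Rabs_pos_eq ((-1 - k) * (-1 - k) - 1)) by nra. field.
Qed.

Lemma fobj_u0 : fobj u0 = 2.
Proof.
  pose proof (fobj_vertical_leg 0 ltac:(lra)) as H.
  rewrite Rminus_0_r in H. unfold u0. rewrite H. field.
Qed.

Lemma fobj_ustar : fobj ustar = 0.
Proof.
  unfold fobj, ustar; simpl. replace (1 * 1 - 1 * 1) with 0 by ring.
  rewrite Rabs_R0. field.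
Qed.

(** In both proofs the mixed terms are bounded below by [1 - y1 y2] and the
    squared terms by their sign on the relevant side of the kink. *)
Lemma frechet_subdiff_vertical_leg (h : R) : 0 <= h < 1 ->
  frechet_subdiff fobj (-1, 1 - h) (0, h).
Proof.
  intros Hh. apply frechet_subdiff_of_quadratic_minorant. intros [y1 y2].
  rewrite fobj_vertical_leg, dist2_sqr by lra. unfold fobj, ustar, inner; simpl.
  pose proof (Rle_abs (y1 * y1 - 1 * 1)). pose proof (Rabs_maj2 (y1 * y1 - 1 * 1)).
  pose proof (Rabs_maj2 (y2 * y2 - 1 * 1)).
  pose proof (Rabs_maj2 (y1 * y2 - 1 * 1)). pose proof (Rabs_maj2 (y2 * y1 - 1 * 1)).
  pose proof (pow2_ge_0 (y1 + 1 - (y2 - (1 - h)))).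
  pose proof (pow2_ge_0 (y1 + 1 + (y2 - (1 - h)))).
  destruct (Rle_dec 0 (y1 + 1)); nra.
Qed.

Lemma frechet_subdiff_horizontal_leg (h : R) : 0 <= h < 1 ->
  frechet_subdiff fobj (-1 + h, 1) (- h, 0).
Proof.
  intros Hh. apply frechet_subdiff_of_quadratic_minorant. intros [y1 y2].
  rewrite fobj_horizontal_leg, dist2_sqr by lra. unfold fobj, ustar, inner; simpl.
  pose proof (Rle_abs (y2 * y2 - 1 * 1)). pose proof (Rabs_maj2 (y2 * y2 - 1 * 1)).
  pose proof (Rabs_maj2 (y1 * y1 - 1 * 1)).
  pose proof (Rabs_maj2 (y1 * y2 - 1 * 1)). pose proof (Rabs_maj2 (y2 * y1 - 1 * 1)).
  pose proof (pow2_ge_0 (y1 - (-1 + h) - (y2 - 1))).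
  pose proof (pow2_ge_0 (y1 - (-1 + h) + (y2 - 1))).
  destruct (Rle_dec 0 (y2 - 1)); nra.
Qed.

Lemma frechet_subdiff_u0 : frechet_subdiff fobj u0 (0, 0).
Proof.
  pose proof (frechet_subdiff_vertical_leg 0 ltac:(lra)) as H.
  rewrite Rminus_0_r in H. exact H.
Qed.

Lemma fobj_kink_at_u0 (G : pt -> R) (d : R) : 0 < d ->
  (forall k, Rabs k < d -> G (-1 + k, 1) = fobj (-1 + k, 1)) ->
  ~ ex_derive (fun t => G (t, 1)) (-1).
Proof.
  intros Hd HG [l Hl]. change (is_derive (fun t : R => G (t, 1)) (-1) l) in Hl.
  assert (HG0 : G (-1, 1) = 2).
  { pose proof (HG 0 ltac:(rewrite Rabs_R0; lra)) as H.
    rewrite Rplus_0_r in H. rewrite H. exact fobj_u0. }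
  assert (Hright : l = 0).
  { apply (is_derive_side_slope _ _ _ 1 0 (Rmin d 1) Hl); [lra | apply Rmin_pos; lra |].
    intros k Hk. pose proof (Rmin_l d 1). pose proof (Rmin_r d 1).
    replace (-1 + 1 * k) with (-1 + k) by ring.
    rewrite HG, fobj_horizontal_leg, HG0 by (rewrite ?Rabs_pos_eq; lra).
    replace ((2 - k ^ 2 / 2 - 2) / (1 * k) - 0) with (- (k / 2)) by (field; lra).
    rewrite Rabs_Ropp, Rabs_pos_eq; lra. }
  assert (Hleft : l = -2).
  { apply (is_derive_side_slope _ _ _ (-1) (-2) d Hl); [lra | exact Hd |].
    intros k Hk. replace (-1 + -1 * k) with (-1 + - k) by ring.
    rewrite HG by (rewrite Rabs_Ropp, Rabs_pos_eq; lra).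
    replace (-1 + - k) with (-1 - k) by ring.
    rewrite fobj_horizontal_left, HG0 by lra.
    replace ((2 + 2 * k + k ^ 2 / 2 - 2) / (-1 * k) - -2) with (- (k / 2)) by (field; lra).
    rewrite Rabs_Ropp, Rabs_pos_eq; lra. }
  lra.
Qed.

Lemma active_part_contains_legs (M : pt -> Prop) (eps c : R) : 0 < eps -> 0 < c ->
  (forall x v, ball2 u0 eps x -> Rabs (fobj x - fobj u0) < eps -> ~ M x ->
     frechet_subdiff fobj x v -> c <= norm2 v) ->
  exists d, 0 < d /\ forall k, 0 < k < d ->
    (M (-1 + k, 1) /\ ball2 u0 eps (-1 + k, 1)) /\
    (M (-1, 1 - k) /\ ball2 u0 eps (-1, 1 - k)).
Proof.
  intros Heps Hc Hsharp.
  destruct (exists_pos_lt3 eps c 1 Heps Hc ltac:(lra)) as (d & Hd & Hde & Hdc & Hd1).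
  exists d. split; [exact Hd|]. intros k Hk.
  assert (Hleg : forall z v, dist2 z u0 = k -> fobj z = 2 - k ^ 2 / 2 ->
            frechet_subdiff fobj z v -> norm2 v = k -> M z /\ ball2 u0 eps z).
  { intros z v Hz Hfz Hv Hnv.
    assert (Hball : ball2 u0 eps z) by (unfold ball2; lra).
    split; [|exact Hball]. apply NNPP. intros HnM.
    assert (Hclose : Rabs (fobj z - fobj u0) < eps)
      by (rewrite Hfz, fobj_u0, Rabs_left by nra; nra).
    pose proof (Hsharp z v Hball Hclose HnM Hv). lra. }
  split.
  - apply (Hleg _ (- k, 0)).
    + unfold u0. rewrite dist2_shift1. apply Rabs_pos_eq. lra.
    + apply fobj_horizontal_leg. lra.
    + apply frechet_subdiff_horizontal_leg. lra.
    + rewrite norm2_axis1, Rabs_Ropp. apply Rabs_pos_eq. lra.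
  - apply (Hleg _ (0, k)).
    + unfold u0. rewrite dist2_shift2. apply Rabs_pos_eq. lra.
    + apply fobj_vertical_leg. lra.
    + apply frechet_subdiff_vertical_leg. lra.
    + rewrite norm2_axis2. apply Rabs_pos_eq. lra.
Qed.

Lemma gradient_eq_0_at_u0 (A : pt -> Prop) (F : pt -> R) (q : nat) (d r : R) :
  0 < d -> 0 < r -> A u0 ->
  (forall k, 0 < k < d -> A (-1 + k, 1) /\ A (-1, 1 - k)) ->
  Cp_on (S q) F (ball2 u0 r) ->
  (forall z, ball2 u0 r z -> A z -> F z = 0) ->
  partial1 F u0 = 0 /\ partial2 F u0 = 0.
Proof.
  intros Hd Hr HA0 Hlegs (_ & HFd & _) Hvanish.
  destruct (HFd u0 (ball2_center u0 r Hr)) as [Hd1 Hd2].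
  apply (partials_eq_0_of_flat_corner F (-1) 1 (Rmin d r));
    [apply Rmin_pos; lra | exact Hd1 | exact Hd2 |].
  intros k Hk. pose proof (Rmin_l d r). pose proof (Rmin_r d r).
  destruct (Hlegs k ltac:(lra)) as [Hh Hv].
  assert (Habs : Rabs k < r) by (rewrite Rabs_pos_eq; lra).
  rewrite (Hvanish (-1, 1)) by (exact (ball2_center u0 r Hr) || exact HA0).
  split; apply Hvanish; try assumption; unfold ball2, u0;
    [rewrite dist2_shift1 | rewrite dist2_shift2]; exact Habs.
Qed.

Theorem proposition3 :
  frechet_subdiff fobj u0 (0, 0) /\
  ~ (forall u : pt, fobj u0 <= fobj u) /\
  (forall p : nat, (1 <= p)%nat ->
     ~ exists M : pt -> Prop, active_manifold p fobj u0 M).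
Proof.
  split; [exact frechet_subdiff_u0|]. split.
  { intros Hmin. pose proof (Hmin ustar). rewrite fobj_u0, fobj_ustar in *. lra. }
  intros [|q] Hp (M & HM0 & eps & Heps & Hsub & (r & Hr & G & HG & HGf) & c & Hc & Hsharp);
    [lia|].
  destruct (active_part_contains_legs M eps c Heps Hc Hsharp) as (d & Hd & Hlegs).
  set (A := fun z => M z /\ ball2 u0 eps z).
  assert (HA0 : A u0) by (split; [exact HM0 | apply ball2_center; lra]).
  destruct Hsub as [Hdim0 | [Hdim1 | Hdim2]].
  - destruct (Hdim0 u0 HA0) as (r0 & Hr0 & F1 & F2 & HF1 & HF2 & Hjac & Hiff).
    apply (Hjac u0 (ball2_center u0 r0 Hr0)).
    destruct (gradient_eq_0_at_u0 A F1 q d r0 Hd Hr0 HA0 Hlegs HF1) as [-> ->];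
      [intros z Hz HAz; apply (Hiff z Hz) in HAz; tauto|].
    destruct (gradient_eq_0_at_u0 A F2 q d r0 Hd Hr0 HA0 Hlegs HF2) as [-> ->];
      [intros z Hz HAz; apply (Hiff z Hz) in HAz; tauto|].
    ring.
  - destruct (Hdim1 u0 HA0) as (r0 & Hr0 & F & HF & Hrank & Hiff).
    apply (Hrank u0 (ball2_center u0 r0 Hr0)).
    destruct (gradient_eq_0_at_u0 A F q d r0 Hd Hr0 HA0 Hlegs HF) as [-> ->];
      [intros z Hz HAz; apply (Hiff z Hz) in HAz; exact HAz | reflexivity].
  - destruct (Hdim2 u0 HA0) as (r1 & Hr1 & Hopen).
    destruct HG as (_ & HGd & _). destruct (HGd u0 (ball2_center u0 r Hr)) as [HGd1 _].
    apply (fobj_kink_at_u0 G (Rmin r1 r)); [apply Rmin_pos; lra | | exact HGd1].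
    intros k Hk. pose proof (Rmin_l r1 r). pose proof (Rmin_r r1 r).
    assert (Hball : forall e, Rabs k < e -> ball2 u0 e (-1 + k, 1))
      by (intros e He; unfold ball2, u0; rewrite dist2_shift1; exact He).
    apply HGf; [apply (Hopen (-1 + k, 1)) | apply Hball]; [apply Hball|]; lra.
Qed.
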